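(* Let $D^k$ be a vertically mapped wedge with $J^k>0$. Let $E$ be an edge of $\widehat T$ with affine parametrization $\gamma:[0,1]\to E$, and let $f=\bm\Phi^k(E\times[0,1])$ be the corresponding quadrilateral face, parametrized by $\bm X(u,t)=\bm\Phi^k(\gamma(u),t)$, $(u,t)\in[0,1]^2$, with surface Jacobian $J^k_f(u,t)=|\partial_u\bm X\times\partial_t\bm X|$. Then $f$ is planar with constant unit normal, and $J^k_f$ is independent of $t$ and affine in $u$. Moreover the face mass matrix $(\bm M^k_f)_{ij,i'j'}=\int_0^1\!\int_0^1\ell_{ij}(\bm X(u,t))\ell_{i'j'}(\bm X(u,t))J^k_f\,du\,dt$ (with $\ell_{ij}$ evaluated at reference coordinates $(\gamma(u),t)$) satisfies $$\bm M^k_f=\widetilde{\bm M}^{\mathrm{tri},k}_{\mathrm{edge}}\otimes\widehat{\bm M}^{\mathrm{1D}},\qquad (\widetilde{\bm M}^{\mathrm{tri},k}_{\mathrm{edge}})_{ii'}=\int_0^1\ell^{\mathrm{tri}}_i(\gamma(u))\ell^{\mathrm{tri}}_{i'}(\gamma(u))J^k_f(u)\,du,$$ and consequently the lift matrix is $$\bm L^k_f:=(\bm M^k)^{-1}\bm M^k_f=\big((\bm M^{\mathrm{tri},k})^{-1}\widetilde{\bm M}^{\mathrm{tri},k}_{\mathrm{edge}}\big)\otimes\bm I_{N+1},$$ which is block diagonal with respect to the index $j$ (i.e. $(\bm L^k_f)_{ij,i'j'}=0$ whenever $j\neq j'$).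
   Context: Reference wedge $\widehat W=\widehat T\times[0,1]$ with $\widehat T=\{(r,s):r,s\ge0,\ r+s\le1\}$. Vertex functions $v_1=(1-r-s)(1-t)$, $v_2=r(1-t)$, $v_3=s(1-t)$, $v_4=(1-r-s)t$, $v_5=rt$, $v_6=st$; a wedge $D^k$ is the image of $\widehat W$ under $\bm{\Phi}^k=\sum_{i=1}^6\bm{\nu}_iv_i$ with vertices $\bm{\nu}_i\in\mathbb{R}^3$, and $J^k=\det[\partial_r\bm{\Phi}^k,\partial_s\bm{\Phi}^k,\partial_t\bm{\Phi}^k]$. It is vertically mapped if the pairs $(\bm{\nu}_1,\bm{\nu}_4)$, $(\bm{\nu}_2,\bm{\nu}_5)$, $(\bm{\nu}_3,\bm{\nu}_6)$ each have identical $x$- and $y$-coordinates. Nodal basis: fix $N\ge1$, points $(r_i,s_i)$, $i=1,\dots,(N+1)(N+2)/2$, in $\widehat T$ unisolvent for polynomials of total degree $\le N$ with Lagrange basis $\ell^{\mathrm{tri}}_i$, and Gauss–Legendre–Lobatto points $0=t_0<\dots<t_N=1$ with Lagrange basis $\ell^{\mathrm{1D}}_j$; $\ell_{ij}=\ell^{\mathrm{tri}}_i(r,s)\ell^{\mathrm{1D}}_j(t)$. Matrices indexed by $(i,j)$ are ordered with $i$ the slow index, so $(\bm A\otimes\bm B)_{ij,i'j'}=\bm A_{ii'}\bm B_{jj'}$. Definitions: $(\bm M^k)_{ij,i'j'}=\int_{\widehat W}\ell_{ij}\ell_{i'j'}J^k$; $(\bm M^{\mathrm{tri},k})_{ii'}=\int_{\widehat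 T}\ell^{\mathrm{tri}}_i\ell^{\mathrm{tri}}_{i'}J^k(r,s)$ (where $J^k$ is independent of $t$ for vertically mapped wedges); $(\widehat{\bm M}^{\mathrm{1D}})_{jj'}=\int_0^1\ell^{\mathrm{1D}}_j\ell^{\mathrm{1D}}_{j'}$; $\bm I_{N+1}$ is the $(N+1)\times(N+1)$ identity. *)

From Stdlib Require Import Reals Lra ClassicalEpsilon.
Open Scope R_scope.

Record V3 := mkV3 { vx : R; vy : R; vz : R }.
Definition vadd (a b : V3) : V3 := mkV3 (vx a + vx b) (vy a + vy b) (vz a + vz b).
Definition vsub (a b : V3) : V3 := mkV3 (vx a - vx b) (vy a - vy b) (vz a - vz b).
Definition vscal (c : R) (a : V3) : V3 := mkV3 (c * vx a) (c * vy a) (c * vz a).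
Definition dot (a b : V3) : R := vx a * vx b + vy a * vy b + vz a * vz b.
Definition cross (a b : V3) : V3 :=
  mkV3 (vy a * vz b - vz a * vy b) (vz a * vx b - vx a * vz b) (vx a * vy b - vy a * vx b).
Definition vnorm (a : V3) : R := sqrt (dot a a).
Definition det3 (a b c : V3) : R := dot a (cross b c).

Definition vderiv (F : R -> V3) (x : R) (d : V3) : Prop :=
  derivable_pt_lim (fun y => vx (F y)) x (vx d) /\
  derivable_pt_lim (fun y => vy (F y)) x (vy d) /\
  derivable_pt_lim (fun y => vz (F y)) x (vz d).

Fixpoint rsum (n : nat) (f : nat -> R) : R :=
  match n with O => 0 | S m => rsum m f + f m end.
Fixpoint rprod (n : nat) (f : nat -> R) : R :=
  match n with O => 1 | S m => rprod m f * f m end.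

(* The Riemann integral of f over [a,b] (a canonical value; meaningful when
   f is Riemann integrable, which is the case for all integrands below). *)
Definition RInt (f : R -> R) (a b : R) : R :=
  epsilon (inhabits 0) (fun v => exists pr : Riemann_integrable f a b, RiemannInt pr = v).
Definition TriInt (g : R -> R -> R) : R :=
  RInt (fun r => RInt (fun s => g r s) 0 (1 - r)) 0 1.
Definition WedgeInt (g : R -> R -> R -> R) : R :=
  RInt (fun t => TriInt (fun r s => g r s t)) 0 1.

Definition in_tri (r s : R) : Prop := 0 <= r /\ 0 <= s /\ r + s <= 1.
Definition in_wedge (r s t : R) : Prop := in_tri r s /\ 0 <= t <= 1.

Definition vfun (i : nat) (r s t : R) : R :=
  match i with
  | 1%nat => (1 - r - s) * (1 - t)
  | 2%nat => r * (1 - t)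
  | 3%nat => s * (1 - t)
  | 4%nat => (1 - r - s) * t
  | 5%nat => r * t
  | 6%nat => s * t
  | _ => 0
  end.

Definition Phi (nu : nat -> V3) (r s t : R) : V3 :=
  vadd (vscal (vfun 1 r s t) (nu 1%nat))
  (vadd (vscal (vfun 2 r s t) (nu 2%nat))
  (vadd (vscal (vfun 3 r s t) (nu 3%nat))
  (vadd (vscal (vfun 4 r s t) (nu 4%nat))
  (vadd (vscal (vfun 5 r s t) (nu 5%nat))
        (vscal (vfun 6 r s t) (nu 6%nat)))))).

Definition vertically_mapped (nu : nat -> V3) : Prop :=
  vx (nu 1%nat) = vx (nu 4%nat) /\ vy (nu 1%nat) = vy (nu 4%nat) /\
  vx (nu 2%nat) = vx (nu 5%nat) /\ vy (nu 2%nat) = vy (nu 5%nat) /\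
  vx (nu 3%nat) = vx (nu 6%nat) /\ vy (nu 3%nat) = vy (nu 6%nat).

Definition is_partials (nu : nat -> V3) (dr ds dt : R -> R -> R -> V3) : Prop :=
  forall r s t,
    vderiv (fun x => Phi nu x s t) r (dr r s t) /\
    vderiv (fun x => Phi nu r x t) s (ds r s t) /\
    vderiv (fun x => Phi nu r s x) t (dt r s t).

Definition Jac (dr ds dt : R -> R -> R -> V3) (r s t : R) : R :=
  det3 (dr r s t) (ds r s t) (dt r s t).

(* number of triangle nodes (N+1)(N+2)/2 ; triangle nodes indexed 0..Np-1 *)
Definition Np (N : nat) : nat := Nat.div ((N + 1) * (N + 2)) 2.

Definition poly2_deg_le (N : nat) (g : R -> R -> R) : Prop :=
  exists c : nat -> nat -> R, forall r s,
    g r s = rsum (S N) (fun a => rsum (S N - a) (fun b => c a b * r ^ a * s ^ b)).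

(* ltri i (i < Np N) is the Lagrange basis of P_N(T) for the nodes (rn i, sn i)
   in T; existence of such a basis is equivalent to unisolvence of the nodes. *)
Definition is_tri_lagrange (N : nat) (rn sn : nat -> R) (ltri : nat -> R -> R -> R) : Prop :=
  (forall i, (i < Np N)%nat -> in_tri (rn i) (sn i)) /\
  (forall i, (i < Np N)%nat -> poly2_deg_le N (ltri i)) /\
  (forall i i', (i < Np N)%nat -> (i' < Np N)%nat ->
      ltri i (rn i') (sn i') = if Nat.eqb i i' then 1 else 0).

(* Legendre polynomials via Bonnet's recursion: legpair n x = (P_n x, P_{n+1} x) *)
Fixpoint legpair (n : nat) (x : R) : R * R :=
  match n with
  | O => (1, x)
  | S m => let (a, b) := legpair m x in
           (b, ((2 * INR m + 3) * x * b - (INR m + 1) * a) / (INR m + 2))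
  end.
Definition Leg (n : nat) (x : R) : R := fst (legpair n x).

(* t_0 < ... < t_N are the Gauss-Legendre-Lobatto points mapped to [0,1]:
   the endpoints together with the roots of P_N'(2t-1). *)
Definition is_GLL (N : nat) (t : nat -> R) : Prop :=
  t O = 0 /\ t N = 1 /\
  (forall j, (j < N)%nat -> t j < t (S j)) /\
  (forall j, (0 < j)%nat -> (j < N)%nat -> derivable_pt_lim (Leg N) (2 * t j - 1) 0).

Definition lag1D (N : nat) (t : nat -> R) (j : nat) (x : R) : R :=
  rprod (S N) (fun m => if Nat.eqb m j then 1 else (x - t m) / (t j - t m)).

Definition tri_vr (a : nat) : R := match a with 1%nat => 1 | _ => 0 end.
Definition tri_vs (a : nat) : R := match a with 2%nat => 1 | _ => 0 end.
(* vertices 0:(0,0), 1:(1,0), 2:(0,1); the edge from vertex a to vertex b is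
   parametrized affinely by gamma(u) = va + u (vb - va) *)
Definition gam_r (a b : nat) (u : R) : R := tri_vr a + u * (tri_vr b - tri_vr a).
Definition gam_s (a b : nat) (u : R) : R := tri_vs a + u * (tri_vs b - tri_vs a).

Definition Xf (nu : nat -> V3) (a b : nat) (u t : R) : V3 :=
  Phi nu (gam_r a b u) (gam_s a b u) t.

Definition is_face_partials (nu : nat -> V3) (a b : nat) (dXu dXt : R -> R -> V3) : Prop :=
  forall u t, vderiv (fun x => Xf nu a b x t) u (dXu u t) /\
              vderiv (fun x => Xf nu a b u x) t (dXt u t).

Definition face_jac (dXu dXt : R -> R -> V3) (u t : R) : R :=
  vnorm (cross (dXu u t) (dXt u t)).

Definition mat2 := (nat * nat) -> (nat * nat) -> R.
Definition mat := nat -> nat -> R.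

Definition kron (A B : mat) : mat2 := fun p q => A (fst p) (fst q) * B (snd p) (snd q).
Definition idm : mat := fun j j' => if Nat.eqb j j' then 1 else 0.
Definition mulmx (n : nat) (A B : mat) : mat := fun i k => rsum n (fun m => A i m * B m k).
Definition is_inv (n : nat) (A B : mat) : Prop :=
  forall i k, (i < n)%nat -> (k < n)%nat -> mulmx n A B i k = idm i k /\ mulmx n B A i k = idm i k.
Definition mulmx2 (n1 n2 : nat) (A B : mat2) : mat2 :=
  fun p q => rsum n1 (fun i => rsum n2 (fun j => A p (i, j) * B (i, j) q)).
Definition idm2 : mat2 := fun p q => idm (fst p) (fst q) * idm (snd p) (snd q).
Definition in_range2 (n1 n2 : nat) (p : nat * nat) : Prop := (fst p < n1)%nat /\ (snd p < n2)%nat.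
Definition is_inv2 (n1 n2 : nat) (A B : mat2) : Prop :=
  forall p q, in_range2 n1 n2 p -> in_range2 n1 n2 q ->
    mulmx2 n1 n2 A B p q = idm2 p q /\ mulmx2 n1 n2 B A p q = idm2 p q.

Definition Mk (N : nat) (ltri : nat -> R -> R -> R) (tg : nat -> R) (J : R -> R -> R -> R) : mat2 :=
  fun p q => WedgeInt (fun r s t =>
    ltri (fst p) r s * lag1D N tg (snd p) t * (ltri (fst q) r s * lag1D N tg (snd q) t) * J r s t).

(* J^k is independent of t for vertically mapped wedges; we evaluate it at t = 0 *)
Definition Mtri (ltri : nat -> R -> R -> R) (J : R -> R -> R -> R) : mat :=
  fun i i' => TriInt (fun r s => ltri i r s * ltri i' r s * J r s 0).

Definition M1D (N : nat) (tg : nat -> R) : mat :=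
  fun j j' => RInt (fun t => lag1D N tg j t * lag1D N tg j' t) 0 1.

Definition Mface (N : nat) (ltri : nat -> R -> R -> R) (tg : nat -> R) (a b : nat)
    (Jf : R -> R -> R) : mat2 :=
  fun p q => RInt (fun t => RInt (fun u =>
     ltri (fst p) (gam_r a b u) (gam_s a b u) * lag1D N tg (snd p) t *
     (ltri (fst q) (gam_r a b u) (gam_s a b u) * lag1D N tg (snd q) t) * Jf u t) 0 1) 0 1.

(* J_f is independent of t; we evaluate it at t = 0 *)
Definition Medge (ltri : nat -> R -> R -> R) (a b : nat) (Jf : R -> R -> R) : mat :=
  fun i i' => RInt (fun u =>
     ltri i (gam_r a b u) (gam_s a b u) * ltri i' (gam_r a b u) (gam_s a b u) * Jf u 0) 0 1.

(* A vertically mapped wedge is Phi(r,s,t) = (x(r,s), y(r,s), (1-t) z_0(r,s) + t z_1(r,s)) with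
   x, y, z_0, z_1 affine, so J = h(r,s) * det B, where B is the Jacobian of (x, y) and
   h = z_1 - z_0: the Jacobian does not depend on t, and J > 0 forces h to have the sign of
   det B. A quadrilateral face lies in the vertical plane over the image of its edge, its normal is
   the horizontal rotation of the edge tangent B gamma', and J_f = |h(gamma(u))| |B gamma'| is affine
   in u. As neither weight depends on t, the iterated integrals defining the volume and face mass
   matrices factor into Kronecker products M_tri (x) M_1D and M_edge (x) M_1D. The factors M_tri
   and M_1D are Gram matrices of nodal bases for a positive weight, hence positive definite and
   invertible, and (M_tri (x) M_1D)^-1 (M_edge (x) M_1D) = (M_tri^-1 M_edge) (x) I. *)

From Pilot Require Import Defs.
From Stdlib Require Import Reals Lra Lia FunctionalExtensionality ClassicalEpsilon List Classical.
From mathcomp Require all_boot all_algebra Rstruct.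
From Coquelicot Require Import Coquelicot.
Open Scope R_scope.

(** * Positive definite matrices are invertible *)

Definition posdef (n : nat) (A : mat) : Prop :=
  forall c : nat -> R, (exists i, (i < n)%nat /\ c i <> 0) ->
    0 < rsum n (fun i => rsum n (fun i' => c i * A i i' * c i')).

Module PosdefInvertible.
Import all_boot all_algebra Rstruct GRing.Theory.
Local Open Scope ring_scope.

Lemma rsum_big (n : nat) (f : nat -> R) : rsum n f = \sum_(i < n) f i.
Proof. by elim: n => [|n IH]; rewrite ?big_ord0 // big_ord_recr /= IH. Qed.

Definition nat_mx {n : nat} (M : 'M[R]_n.+1) : mat := fun i k => M (inord i) (inord k).

Lemma mulmx_nat_mx n (M N : 'M[R]_n.+1) i k :
  Defs.mulmx n.+1 (nat_mx M) (nat_mx N) i k = nat_mx (M *m N) i k.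
Proof.
rewrite /Defs.mulmx rsum_big /nat_mx mxE.
by apply: eq_bigr => j _; rewrite inord_val.
Qed.

Lemma nat_mx1 n i k : (i < n.+1)%N -> (k < n.+1)%N -> nat_mx (1%:M : 'M[R]_n.+1) i k = idm i k.
Proof.
move=> Hi Hk; rewrite /nat_mx mxE /idm.
case: (PeanoNat.Nat.eqb_spec i k) => [->|Hne]; first by rewrite eqxx.
by case: eqP => // /(congr1 val); rewrite /= !inordK.
Qed.

Lemma posdef_unitmx n (A : mat) :
  posdef n.+1 A -> (\matrix_(i < n.+1, j < n.+1) A i j) \in unitmx.
Proof.
move=> Apd; rewrite unitmxE unitfE; apply/negP => /det0P [v v_neq0 vA0].
have [j vj_neq0] : exists j, v ord0 j <> 0.
  apply/not_all_not_ex => v_eq0; move/negP: v_neq0; apply.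
  by apply/eqP/rowP => k; rewrite mxE; apply: NNPP; apply: v_eq0.
set c := fun i : nat => v ord0 (inord i).
have : Rlt 0 (rsum n.+1 (fun i => rsum n.+1 (fun i' => c i * A i i' * c i'))).
  by apply: Apd; exists j; split; [apply/ltP | rewrite /c inord_val].
rewrite rsum_big (_ : \sum_(i < n.+1) _ = 0); first exact: Rlt_irrefl.
under eq_bigr => i _ do rewrite rsum_big.
rewrite exchange_big; apply: big1 => i' _; rewrite -mulr_suml.
have -> : \sum_(i < n.+1) c i * A i i' = (v *m \matrix_(i, j) A i j) ord0 i'.
  by rewrite mxE; apply: eq_bigr => i _; rewrite /c !mxE inord_val.
by rewrite vA0 mxE mul0r.
Qed.

Lemma posdef_is_inv n (A : mat) : posdef n A -> exists B, is_inv n A B.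
Proof.
case: n => [|n] Apd; first by exists A => i k /leP.
set M := \matrix_(i < n.+1, j < n.+1) A i j.
have A_M : forall i k, (i < n.+1)%N -> (k < n.+1)%N -> A i k = nat_mx M i k.
  by move=> i k Hi Hk; rewrite /nat_mx mxE !inordK.
exists (nat_mx (invmx M)) => i k /ltP Hi /ltP Hk.
have Mu := posdef_unitmx _ _ Apd.
rewrite -(nat_mx1 _ _ _ Hi Hk) -{1}(mulmxV Mu) -(mulVmx Mu) -!mulmx_nat_mx.
rewrite /Defs.mulmx !rsum_big.
by split; apply: eq_bigr => j _; rewrite A_M.
Qed.

End PosdefInvertible.

(** * Finite sums and Kronecker products *)

Lemma rsum_ext n f g : (forall i, (i < n)%nat -> f i = g i) -> rsum n f = rsum n g.
Proof. induction n; intros H; simpl; [reflexivity|]. rewrite IHn, H by auto with arith. reflexivity. Qed.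

Lemma rsum_plus n f g : rsum n (fun i => f i + g i) = rsum n f + rsum n g.
Proof. induction n; simpl; [|rewrite IHn]; ring. Qed.

Lemma rsum_scal_l n c f : rsum n (fun i => c * f i) = c * rsum n f.
Proof. induction n; simpl; [|rewrite IHn]; ring. Qed.

Lemma rsum_scal_r n c f : rsum n (fun i => f i * c) = rsum n f * c.
Proof. induction n; simpl; [|rewrite IHn]; ring. Qed.

Lemma rsum_zero n f : (forall i, (i < n)%nat -> f i = 0) -> rsum n f = 0.
Proof. induction n; intros H; simpl; [|rewrite IHn, H by auto with arith]; ring. Qed.

Lemma rsum_swap n m (f : nat -> nat -> R) :
  rsum n (fun i => rsum m (fun j => f i j)) = rsum m (fun j => rsum n (fun i => f i j)).
Proof.
  induction n; simpl.
  - symmetry; apply rsum_zero; reflexivity.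
  - rewrite IHn, <- rsum_plus. reflexivity.
Qed.

Lemma rsum_idm_l n i0 f : (i0 < n)%nat -> rsum n (fun i => idm i0 i * f i) = f i0.
Proof.
  induction n; intros H; [lia|]. simpl. unfold idm at 2.
  destruct (PeanoNat.Nat.eqb_spec i0 n) as [->|Hne].
  - rewrite rsum_zero; [ring|]. intros i Hi. unfold idm.
    destruct (PeanoNat.Nat.eqb_spec n i); [lia|ring].
  - rewrite IHn by lia. ring.
Qed.

Lemma idm_sym i k : idm i k = idm k i.
Proof. unfold idm. rewrite PeanoNat.Nat.eqb_sym. reflexivity. Qed.

Lemma rsum_idm_r n i0 f : (i0 < n)%nat -> rsum n (fun i => f i * idm i i0) = f i0.
Proof.
  intros H. rewrite <- (rsum_idm_l n i0 f H). apply rsum_ext. intros i _.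
  rewrite idm_sym. ring.
Qed.

Definition rsum2 n m (F : nat * nat -> R) : R := rsum n (fun i => rsum m (fun j => F (i, j))).

Lemma rsum2_ext n m F G : (forall x, in_range2 n m x -> F x = G x) -> rsum2 n m F = rsum2 n m G.
Proof. intros H. apply rsum_ext; intros. apply rsum_ext; intros. apply H. split; assumption. Qed.

Lemma rsum2_scal_l n m c F : rsum2 n m (fun x => c * F x) = c * rsum2 n m F.
Proof. unfold rsum2. rewrite <- rsum_scal_l. apply rsum_ext; intros. apply rsum_scal_l. Qed.

Lemma rsum2_scal_r n m c F : rsum2 n m (fun x => F x * c) = rsum2 n m F * c.
Proof. unfold rsum2. rewrite <- rsum_scal_r. apply rsum_ext; intros. apply rsum_scal_r. Qed.

Lemma rsum2_swap n m (F : nat * nat -> nat * nat -> R) :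
  rsum2 n m (fun x => rsum2 n m (fun y => F x y)) = rsum2 n m (fun y => rsum2 n m (fun x => F x y)).
Proof.
  unfold rsum2.
  transitivity (rsum n (fun i => rsum n (fun k => rsum m (fun l => rsum m (fun j => F (i, j) (k, l)))))).
  { apply rsum_ext; intros i _. rewrite rsum_swap. apply rsum_ext; intros k _. apply rsum_swap. }
  rewrite rsum_swap. apply rsum_ext; intros k _. apply rsum_swap.
Qed.

Lemma rsum2_idm2_l n m p F : in_range2 n m p -> rsum2 n m (fun x => idm2 p x * F x) = F p.
Proof.
  intros [Hp1 Hp2]. unfold rsum2, idm2; simpl.
  transitivity (rsum n (fun i => idm (fst p) i * rsum m (fun j => idm (snd p) j * F (i, j)))).
  { apply rsum_ext; intros i _. rewrite <- rsum_scal_l. apply rsum_ext; intros; ring. }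
  rewrite rsum_idm_l, rsum_idm_l by assumption. destruct p; reflexivity.
Qed.

Lemma rsum2_idm2_r n m p F : in_range2 n m p -> rsum2 n m (fun x => F x * idm2 x p) = F p.
Proof.
  intros H. rewrite <- (rsum2_idm2_l n m p F H). apply rsum2_ext. intros x _.
  unfold idm2. rewrite (idm_sym (fst x)), (idm_sym (snd x)). ring.
Qed.

Lemma mulmx2_rsum2 n m A B p q : mulmx2 n m A B p q = rsum2 n m (fun x => A p x * B x q).
Proof. reflexivity. Qed.

Lemma mulmx2_ext n m A A' B B' p q :
  (forall x, in_range2 n m x -> A p x = A' p x /\ B x q = B' x q) ->
  mulmx2 n m A B p q = mulmx2 n m A' B' p q.
Proof.
  intros H. rewrite !mulmx2_rsum2. apply rsum2_ext.
  intros x Hx. destruct (H x Hx) as [-> ->]. reflexivity.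
Qed.

Lemma mulmx2_kron n m A1 A2 B1 B2 p q :
  mulmx2 n m (kron A1 A2) (kron B1 B2) p q = mulmx n A1 B1 (fst p) (fst q) * mulmx m A2 B2 (snd p) (snd q).
Proof.
  unfold mulmx2, mulmx, kron; simpl. rewrite <- rsum_scal_r. apply rsum_ext; intros i _.
  rewrite <- rsum_scal_l. apply rsum_ext; intros j _. ring.
Qed.

Lemma is_inv2_kron n m A B Ainv Binv :
  is_inv n A Ainv -> is_inv m B Binv -> is_inv2 n m (kron A B) (kron Ainv Binv).
Proof.
  intros HA HB p q [Hp1 Hp2] [Hq1 Hq2]. rewrite !mulmx2_kron. unfold idm2.
  destruct (HA _ _ Hp1 Hq1) as [-> ->], (HB _ _ Hp2 Hq2) as [-> ->]. split; reflexivity.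
Qed.

Lemma is_inv2_ext n m M M' X :
  (forall p q, in_range2 n m p -> in_range2 n m q -> M p q = M' p q) ->
  is_inv2 n m M' X -> is_inv2 n m M X.
Proof.
  intros HM HX p q Hp Hq.
  rewrite (mulmx2_ext n m M M' X X), (mulmx2_ext n m X X M M'); auto.
Qed.

Lemma is_inv2_unique n m M X Y p q :
  is_inv2 n m M X -> is_inv2 n m M Y -> in_range2 n m p -> in_range2 n m q -> X p q = Y p q.
Proof.
  intros HX HY Hp Hq.
  rewrite <- (rsum2_idm2_r n m q (fun x => X p x)) by assumption.
  transitivity (rsum2 n m (fun x => X p x * rsum2 n m (fun y => M x y * Y y q))).
  { apply rsum2_ext. intros x Hx. rewrite <- (proj1 (HY x q Hx Hq)). reflexivity. }
  transitivity (rsum2 n m (fun y => rsum2 n m (fun x => X p x * M x y) * Y y q)).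
  { transitivity (rsum2 n m (fun x => rsum2 n m (fun y => X p x * M x y * Y y q))).
    { apply rsum2_ext; intros x _. rewrite <- rsum2_scal_l. apply rsum2_ext; intros; ring. }
    rewrite rsum2_swap. apply rsum2_ext; intros y _.
    apply (rsum2_scal_r n m (Y y q) (fun x => X p x * M x y)). }
  rewrite <- (rsum2_idm2_l n m p (fun y => Y y q)) by assumption.
  apply rsum2_ext. intros y Hy. rewrite <- (proj2 (HX p y Hp Hy)). reflexivity.
Qed.

Lemma lift_kron n m (Mk Mf : mat2) (A B E Ainv Binv : mat) Minv :
  (forall p q, in_range2 n m p -> in_range2 n m q -> Mk p q = kron A B p q) ->
  (forall p q, in_range2 n m p -> in_range2 n m q -> Mf p q = kron E B p q) ->
  is_inv n A Ainv -> is_inv m B Binv -> is_inv2 n m Mk Minv ->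
  forall p q, in_range2 n m p -> in_range2 n m q ->
    mulmx2 n m Minv Mf p q = kron (mulmx n Ainv E) idm p q.
Proof.
  intros HMk HMf HA HB HMinv p q Hp Hq.
  assert (HK : is_inv2 n m Mk (kron Ainv Binv))
    by (apply (is_inv2_ext n m Mk (kron A B)); [exact HMk | apply is_inv2_kron; assumption]).
  rewrite (mulmx2_ext n m Minv (kron Ainv Binv) Mf (kron E B)).
  - rewrite mulmx2_kron. unfold kron. destruct Hp as [_ Hp], Hq as [_ Hq].
    rewrite (proj2 (HB _ _ Hp Hq)). reflexivity.
  - intros x Hx. split; [apply (is_inv2_unique n m Mk) | apply HMf]; assumption.
Qed.

(** * Integrals of continuous functions *)

Notation DRInt := Defs.RInt.

Definition cont (f : R -> R) : Prop := forall x, continuous f x.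

Lemma cont_ext f g : (forall x, f x = g x) -> cont f -> cont g.
Proof. intros H Hf x. apply (continuous_ext f); auto. Qed.

Lemma cont_const c : cont (fun _ => c).
Proof. intros x; apply continuous_const. Qed.
Lemma cont_id : cont (fun x => x).
Proof. intros x; apply continuous_id. Qed.
Lemma cont_plus f g : cont f -> cont g -> cont (fun x => f x + g x).
Proof. intros Hf Hg x. exact (continuous_plus f g x (Hf x) (Hg x)). Qed.
Lemma cont_mult f g : cont f -> cont g -> cont (fun x => f x * g x).
Proof. intros Hf Hg x. exact (continuous_mult f g x (Hf x) (Hg x)). Qed.
Lemma cont_minus f g : cont f -> cont g -> cont (fun x => f x - g x).
Proof. intros Hf Hg x. exact (continuous_minus f g x (Hf x) (Hg x)). Qed.
Lemma cont_comp f g : cont f -> cont g -> cont (fun x => g (f x)).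
Proof. intros Hf Hg x. apply continuous_comp; auto. Qed.
Lemma cont_pow f k : cont f -> cont (fun x => f x ^ k).
Proof. intros Hf. induction k; simpl; [apply cont_const | apply cont_mult; auto]. Qed.
Lemma cont_abs f : cont f -> cont (fun x => Rabs (f x)).
Proof. intros Hf x. apply continuous_Rabs_comp; auto. Qed.
Lemma cont_rprod n F : (forall i, (i < n)%nat -> cont (F i)) -> cont (fun x => rprod n (fun i => F i x)).
Proof. induction n; intros H; simpl; [apply cont_const | apply cont_mult; auto]. Qed.

Ltac cont_tac :=
  repeat first [ assumption | apply cont_const | apply cont_id | apply cont_minus | apply cont_plus
               | apply cont_mult | apply cont_pow | apply cont_abs ].

Lemma cont_ex_RInt f a b : cont f -> ex_RInt f a b.
Proof. intros Hf. apply (ex_RInt_continuous (V:=R_CompleteNormedModule)). intros; apply Hf. Qed.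

Lemma DRInt_RInt f a b : cont f -> DRInt f a b = RInt f a b.
Proof.
  intros Hf. pose proof (ex_RInt_Reals_0 _ _ _ (cont_ex_RInt f a b Hf)) as pr.
  rewrite (RInt_Reals f a b pr). unfold Defs.RInt.
  destruct (epsilon_spec (inhabits 0) (fun v => exists pr0 : Riemann_integrable f a b, RiemannInt pr0 = v))
    as [pr' <-].
  { exists (RiemannInt pr), pr. reflexivity. }
  apply RiemannInt_P5.
Qed.

Lemma DRInt_scal f c a b : cont f -> DRInt (fun x => c * f x) a b = c * DRInt f a b.
Proof.
  intros Hf. rewrite !DRInt_RInt by cont_tac.
  exact (RInt_scal f a b c (cont_ex_RInt f a b Hf)).
Qed.

Lemma DRInt_plus f g a b : cont f -> cont g ->
  DRInt (fun x => f x + g x) a b = DRInt f a b + DRInt g a b.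
Proof.
  intros Hf Hg. rewrite !DRInt_RInt by cont_tac.
  exact (RInt_plus f g a b (cont_ex_RInt f a b Hf) (cont_ex_RInt g a b Hg)).
Qed.

Lemma DRInt_zero a b : DRInt (fun _ => 0) a b = 0.
Proof.
  rewrite DRInt_RInt, RInt_const by apply cont_const.
  apply (scal_zero_r (K:=R_Ring) (V:=R_ModuleSpace)).
Qed.

Lemma cont_DRInt_upper g : cont g -> cont (fun x => DRInt g 0 x).
Proof.
  intros Hg x. apply (continuous_ext (fun x => RInt g 0 x)).
  { intros y. symmetry. apply DRInt_RInt, Hg. }
  apply (continuous_RInt_1 g 0 x (fun z => RInt g 0 z)).
  apply filter_forall. intros z. apply (RInt_correct (V:=R_CompleteNormedModule)), cont_ex_RInt, Hg.
Qed.

Lemma cont_pos_near f x0 : cont f -> 0 < f x0 ->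
  exists alp, 0 < alp /\ forall y, Rabs (y - x0) < alp -> 0 < f y.
Proof.
  intros Hf Hfx0.
  destruct (proj2 (continuity_pt_filterlim f x0) (Hf x0) (f x0) Hfx0) as [alp [Halp Hnear]].
  exists alp. split; [assumption|]. intros y Hy.
  destruct (Req_dec y x0) as [->|Hne]; [assumption|].
  assert (Hd : Rabs (f y - f x0) < f x0) by (apply (Hnear y); repeat split; auto).
  apply Rabs_def2 in Hd. lra.
Qed.

Lemma DRInt_gt_0 f a b x0 : cont f -> a < b -> (forall x, a <= x <= b -> 0 <= f x) ->
  a <= x0 <= b -> 0 < f x0 -> 0 < DRInt f a b.
Proof.
  intros Hf Hab Hpos Hx0 Hfx0. rewrite DRInt_RInt by assumption.
  destruct (cont_pos_near f x0 Hf Hfx0) as [alp [Halp Hnear]].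
  set (x1 := Rmax a (x0 - alp/2)). set (x2 := Rmin b (x0 + alp/2)).
  assert (Hx1 : a <= x1 /\ x0 - alp/2 <= x1 /\ x1 <= x0)
    by (unfold x1; repeat split; [apply Rmax_l | apply Rmax_r | apply Rmax_lub; lra]).
  assert (Hx2 : x2 <= b /\ x2 <= x0 + alp/2 /\ x0 <= x2)
    by (unfold x2; repeat split; [apply Rmin_l | apply Rmin_r | apply Rmin_glb; lra]).
  assert (Hlt : x1 < x2).
  { unfold x1, x2, Rmax, Rmin. destruct (Rle_dec a (x0 - alp/2)), (Rle_dec b (x0 + alp/2)); lra. }
  assert (E1 := RInt_Chasles f a x1 x2 (cont_ex_RInt _ _ _ Hf) (cont_ex_RInt _ _ _ Hf)).
  assert (E2 := RInt_Chasles f a x2 b (cont_ex_RInt _ _ _ Hf) (cont_ex_RInt _ _ _ Hf)).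
  simpl in E1, E2. unfold plus in E1, E2; simpl in E1, E2. rewrite <- E2, <- E1.
  assert (0 <= RInt f a x1)
    by (apply RInt_ge_0; [lra | apply cont_ex_RInt, Hf | intros x Hx; apply Hpos; lra]).
  assert (0 <= RInt f x2 b)
    by (apply RInt_ge_0; [lra | apply cont_ex_RInt, Hf | intros x Hx; apply Hpos; lra]).
  assert (0 < RInt f x1 x2)
    by (apply RInt_gt_0; [lra | intros x Hx; apply Hnear, Rabs_def1; lra | intros; apply Hf]).
  lra.
Qed.

(** * Integrals over the reference triangle *)

(* Integrands on the triangle are handled as finite sums of products [f r * g s] of continuous
   functions: for these [r |-> DRInt (G r) 0 (1 - r)] is again continuous, which is what the
   iterated integral [TriInt] needs to be linear and positive. *)
Definition sep_eval (l : list ((R -> R) * (R -> R))) (r s : R) : R :=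
  fold_right (fun fg acc => fst fg r * snd fg s + acc) 0 l.

Lemma sep_eval_app l1 l2 r s : sep_eval (l1 ++ l2) r s = sep_eval l1 r s + sep_eval l2 r s.
Proof. unfold sep_eval. induction l1; simpl; [|rewrite IHl1]; ring. Qed.

Definition sep_mul1 (fg1 fg2 : (R -> R) * (R -> R)) : (R -> R) * (R -> R) :=
  (fun r => fst fg1 r * fst fg2 r, fun s => snd fg1 s * snd fg2 s).

Definition sep_mul l1 l2 := flat_map (fun fg1 => map (sep_mul1 fg1) l2) l1.

Lemma sep_eval_cons fg l r s : sep_eval (fg :: l) r s = fst fg r * snd fg s + sep_eval l r s.
Proof. reflexivity. Qed.

Lemma sep_eval_mul1 fg1 l r s :
  sep_eval (map (sep_mul1 fg1) l) r s = fst fg1 r * snd fg1 s * sep_eval l r s.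
Proof.
  induction l as [|fg l IH]; [unfold sep_eval; simpl; ring|].
  simpl map. rewrite !sep_eval_cons, IH. unfold sep_mul1; simpl. ring.
Qed.

Lemma sep_eval_mul l1 l2 r s : sep_eval (sep_mul l1 l2) r s = sep_eval l1 r s * sep_eval l2 r s.
Proof.
  unfold sep_mul. induction l1 as [|fg1 l1 IH]; [unfold sep_eval; simpl; ring|].
  simpl flat_map. rewrite sep_eval_app, sep_eval_mul1, IH, sep_eval_cons. ring.
Qed.

Definition sep_cont (l : list ((R -> R) * (R -> R))) : Prop :=
  forall fg, In fg l -> cont (fst fg) /\ cont (snd fg).

Definition separable (G : R -> R -> R) : Prop :=
  exists l, sep_cont l /\ forall r s, G r s = sep_eval l r s.

Lemma separable_ext G G' : separable G -> (forall r s, G' r s = G r s) -> separable G'.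
Proof. intros [l [Hl HG]] H. exists l. split; [assumption|]. intros; rewrite H; auto. Qed.

Lemma separable_prod f g : cont f -> cont g -> separable (fun r s => f r * g s).
Proof.
  intros Hf Hg. exists ((f, g) :: nil). split.
  - intros fg [<-|[]]; split; assumption.
  - intros; unfold sep_eval; simpl; ring.
Qed.

Lemma separable_const c : separable (fun _ _ => c).
Proof.
  apply (separable_ext (fun r s => c * 1)); [apply separable_prod; apply cont_const | intros; ring].
Qed.

Lemma separable_plus G1 G2 : separable G1 -> separable G2 -> separable (fun r s => G1 r s + G2 r s).
Proof.
  intros [l1 [Hl1 H1]] [l2 [Hl2 H2]]. exists (l1 ++ l2). split.
  - intros fg Hin. apply in_app_or in Hin. destruct Hin; auto.
  - intros r s. rewrite sep_eval_app, H1, H2. reflexivity.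
Qed.

Lemma separable_mult G1 G2 : separable G1 -> separable G2 -> separable (fun r s => G1 r s * G2 r s).
Proof.
  intros [l1 [Hl1 H1]] [l2 [Hl2 H2]]. exists (sep_mul l1 l2). split.
  - intros fg Hin. apply in_flat_map in Hin. destruct Hin as [fg1 [Hin1 Hin2]].
    apply in_map_iff in Hin2. destruct Hin2 as [fg2 [<- Hin2]].
    destruct (Hl1 _ Hin1), (Hl2 _ Hin2). split; simpl; apply cont_mult; assumption.
  - intros r s. rewrite sep_eval_mul, H1, H2. reflexivity.
Qed.

Lemma separable_rsum n F :
  (forall i, (i < n)%nat -> separable (F i)) -> separable (fun r s => rsum n (fun i => F i r s)).
Proof.
  induction n; intros H; simpl; [apply separable_const | apply separable_plus; auto].
Qed.

Lemma sep_eval_cont_r l s : sep_cont l -> cont (fun r => sep_eval l r s).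
Proof.
  induction l as [|fg l IH]; intros Hl.
  - apply (cont_ext (fun _ => 0)); [reflexivity | apply cont_const].
  - destruct (Hl fg) as [Hf _]; [left; reflexivity|].
    apply (cont_ext (fun r => fst fg r * snd fg s + sep_eval l r s)); [reflexivity|].
    apply cont_plus; [cont_tac | apply IH; intros fg' H; apply Hl; right; assumption].
Qed.

Lemma sep_eval_cont_s l r : sep_cont l -> cont (fun s => sep_eval l r s).
Proof.
  induction l as [|fg l IH]; intros Hl.
  - apply (cont_ext (fun _ => 0)); [reflexivity | apply cont_const].
  - destruct (Hl fg) as [_ Hg]; [left; reflexivity|].
    apply (cont_ext (fun s => fst fg r * snd fg s + sep_eval l r s)); [reflexivity|].
    apply cont_plus; [cont_tac | apply IH; intros fg' H; apply Hl; right; assumption].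
Qed.

Lemma DRInt_sep_eval l r a b : sep_cont l ->
  DRInt (fun s => sep_eval l r s) a b = fold_right (fun fg acc => fst fg r * DRInt (snd fg) a b + acc) 0 l.
Proof.
  induction l as [|fg l IH]; intros Hl; [apply DRInt_zero|].
  assert (Hl' : sep_cont l) by (intros fg' H; apply Hl; right; assumption).
  destruct (Hl fg) as [_ Hg]; [left; reflexivity|].
  simpl. rewrite <- IH by assumption.
  rewrite <- DRInt_scal, <- DRInt_plus by (try apply sep_eval_cont_s; cont_tac). reflexivity.
Qed.

Lemma separable_cont_r G s : separable G -> cont (fun r => G r s).
Proof. intros [l [Hl HG]]. apply (cont_ext (fun r => sep_eval l r s)); [auto | apply sep_eval_cont_r, Hl]. Qed.

Lemma separable_cont_s G r : separable G -> cont (fun s => G r s).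
Proof. intros [l [Hl HG]]. apply (cont_ext (fun s => sep_eval l r s)); [auto | apply sep_eval_cont_s, Hl]. Qed.

Lemma separable_cont_slice G : separable G -> cont (fun r => DRInt (fun s => G r s) 0 (1 - r)).
Proof.
  intros [l [Hl HG]].
  apply (cont_ext (fun r => fold_right (fun fg acc => fst fg r * DRInt (snd fg) 0 (1 - r) + acc) 0 l)).
  { intros r. rewrite <- DRInt_sep_eval by assumption. f_equal. extensionality s. auto. }
  clear HG. induction l as [|fg l IH]; simpl; [apply cont_const|].
  destruct (Hl fg) as [Hf Hg]; [left; reflexivity|].
  apply cont_plus; [apply cont_mult; [assumption|] | apply IH; intros fg' H; apply Hl; right; assumption].
  apply (cont_comp (fun r => 1 - r)); [cont_tac | apply cont_DRInt_upper, Hg].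
Qed.

Lemma TriInt_scal c G : separable G -> TriInt (fun r s => c * G r s) = c * TriInt G.
Proof.
  intros HG. unfold TriInt. rewrite <- DRInt_scal by (apply separable_cont_slice, HG).
  f_equal. extensionality r. apply DRInt_scal, separable_cont_s, HG.
Qed.

Lemma TriInt_plus G1 G2 : separable G1 -> separable G2 ->
  TriInt (fun r s => G1 r s + G2 r s) = TriInt G1 + TriInt G2.
Proof.
  intros H1 H2. unfold TriInt. rewrite <- DRInt_plus by (apply separable_cont_slice; assumption).
  f_equal. extensionality r. apply DRInt_plus; apply separable_cont_s; assumption.
Qed.

Lemma TriInt_gt_0 G r0 s0 : separable G -> (forall r s, in_tri r s -> 0 <= G r s) ->
  in_tri r0 s0 -> 0 < G r0 s0 -> 0 < TriInt G.
Proof.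
  intros HG Hpos [Hr0 [Hs0 Hrs0]] HG0.
  assert (Hslice : forall r, 0 <= r <= 1 -> 0 <= DRInt (fun s => G r s) 0 (1 - r)).
  { intros r Hr. rewrite DRInt_RInt by (apply separable_cont_s, HG).
    apply RInt_ge_0; [lra | apply cont_ex_RInt, separable_cont_s, HG |].
    intros s Hs. apply Hpos. unfold in_tri; lra. }
  assert (Hslice_pos : forall r, 0 <= r < 1 -> s0 <= 1 - r -> 0 < G r s0 ->
                         0 < DRInt (fun s => G r s) 0 (1 - r)).
  { intros r Hr Hs Hg. apply (DRInt_gt_0 _ _ _ s0); [apply separable_cont_s, HG | lra | | lra | assumption].
    intros s Hs'. apply Hpos. unfold in_tri; lra. }
  unfold TriInt. destruct (Rlt_dec r0 1) as [Hr1|Hr1].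
  - apply (DRInt_gt_0 _ _ _ r0); [apply separable_cont_slice, HG | lra | | lra |].
    + intros r Hr. apply Hslice. lra.
    + apply Hslice_pos; lra.
  - (* the vertex (1,0) carries no slice of positive length; move left along the edge s = 0 *)
    assert (r0 = 1) by lra. assert (s0 = 0) by lra. subst.
    destruct (cont_pos_near (fun r => G r 0) 1 (separable_cont_r G 0 HG) HG0) as [alp [Halp Hnear]].
    set (r1 := Rmax 0 (1 - alp / 2)).
    assert (Hr1' : 0 <= r1 < 1 /\ 1 - alp / 2 <= r1)
      by (unfold r1; repeat split; [apply Rmax_l | apply Rmax_lub_lt; lra | apply Rmax_r]).
    assert (HGr1 : 0 < G r1 0) by (apply Hnear, Rabs_def1; lra).
    apply (DRInt_gt_0 _ _ _ r1); [apply separable_cont_slice, HG | lra | | lra |].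
    + intros r Hr. apply Hslice. lra.
    + apply Hslice_pos; lra.
Qed.

Lemma DRInt2_tensor g h a b c d : cont g -> cont h ->
  DRInt (fun t => DRInt (fun u => g u * h t) a b) c d = DRInt g a b * DRInt h c d.
Proof.
  intros Hg Hh. rewrite <- DRInt_scal by assumption. f_equal. extensionality t.
  rewrite Rmult_comm, <- DRInt_scal by assumption. f_equal. extensionality u. ring.
Qed.

Lemma WedgeInt_tensor g h : separable g -> cont h ->
  WedgeInt (fun r s t => g r s * h t) = TriInt g * DRInt h 0 1.
Proof.
  intros Hg Hh. unfold WedgeInt. rewrite <- DRInt_scal by assumption. f_equal. extensionality t.
  rewrite Rmult_comm, <- TriInt_scal by assumption. f_equal. extensionality r. extensionality s. ring.
Qed.

Lemma separable_cont_comp G fr fs : separable G -> cont fr -> cont fs -> cont (fun u => G (fr u) (fs u)).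
Proof.
  intros [l [Hl HG]] Hr Hs. apply (cont_ext (fun u => sep_eval l (fr u) (fs u))); [intros; auto|].
  clear HG. induction l as [|fg l IH].
  - apply (cont_ext (fun _ => 0)); [reflexivity | apply cont_const].
  - destruct (Hl fg) as [Hf Hg]; [left; reflexivity|].
    apply (cont_ext (fun u => fst fg (fr u) * snd fg (fs u) + sep_eval l (fr u) (fs u))); [reflexivity|].
    apply cont_plus; [apply cont_mult; apply cont_comp; assumption|].
    apply IH. intros fg' H; apply Hl; right; assumption.
Qed.

Lemma separable_affine c0 c1 c2 : separable (fun r s => c0 + c1 * r + c2 * s).
Proof.
  apply separable_plus; [apply separable_plus|].
  - apply separable_const.
  - apply (separable_ext (fun r s => (c1 * r) * 1)); [apply separable_prod; cont_tac | intros; ring].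
  - apply (separable_ext (fun r s => 1 * (c2 * s))); [apply separable_prod; cont_tac | intros; ring].
Qed.

(** * Gram matrices *)

Section GramPosdef.
Variables (X : Type) (I : (X -> R) -> R) (adm : (X -> R) -> Prop) (dom : X -> Prop).
Hypothesis adm_const : forall c, adm (fun _ => c).
Hypothesis adm_plus : forall f g, adm f -> adm g -> adm (fun x => f x + g x).
Hypothesis adm_mult : forall f g, adm f -> adm g -> adm (fun x => f x * g x).
Hypothesis I_plus : forall f g, adm f -> adm g -> I (fun x => f x + g x) = I f + I g.
Hypothesis I_scal : forall c f, adm f -> I (fun x => c * f x) = c * I f.
Hypothesis I_gt_0 : forall f x0, adm f -> (forall x, dom x -> 0 <= f x) -> dom x0 -> 0 < f x0 -> 0 < I f.

Lemma adm_rsum n F : (forall i, (i < n)%nat -> adm (F i)) -> adm (fun x => rsum n (fun i => F i x)).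
Proof. induction n; intros H; simpl; [apply adm_const | apply adm_plus; auto]. Qed.

Lemma I_rsum n F : (forall i, (i < n)%nat -> adm (F i)) ->
  I (fun x => rsum n (fun i => F i x)) = rsum n (fun i => I (F i)).
Proof.
  induction n; intros H; simpl.
  - replace (fun _ : X => 0) with (fun _ : X => 0 * 1) by (extensionality x; ring).
    rewrite I_scal by apply adm_const. ring.
  - rewrite I_plus, IHn by (auto || apply adm_rsum; auto). reflexivity.
Qed.

Variables (n : nat) (phi : nat -> X -> R) (node : nat -> X).
Hypothesis phi_adm : forall i, (i < n)%nat -> adm (phi i).
Hypothesis node_dom : forall i, (i < n)%nat -> dom (node i).
Hypothesis phi_node : forall i k, (i < n)%nat -> (k < n)%nat -> phi i (node k) = idm i k.

Lemma gram_posdef : posdef n (fun i i' => I (fun x => phi i x * phi i' x)).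
Proof.
  intros c [i0 [Hi0 Hc0]].
  set (v x := rsum n (fun i => c i * phi i x)).
  assert (Hv : adm v) by (apply adm_rsum; intros; apply adm_mult; auto).
  assert (Hquad : I (fun x => v x * v x) = rsum n (fun i => rsum n (fun i' => c i * I (fun x => phi i x * phi i' x) * c i'))).
  { replace (fun x => v x * v x)
      with (fun x => rsum n (fun i => rsum n (fun i' => (c i * c i') * (phi i x * phi i' x)))).
    - rewrite I_rsum.
      + apply rsum_ext; intros i Hi. rewrite I_rsum.
        * apply rsum_ext; intros i' Hi'. rewrite I_scal by auto. ring.
        * intros i' Hi'. apply adm_mult; auto.
      + intros i Hi. apply adm_rsum. intros i' Hi'. apply adm_mult; auto.
    - extensionality x. unfold v. rewrite <- rsum_scal_r. apply rsum_ext; intros i _.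
      rewrite <- rsum_scal_l. apply rsum_ext; intros; ring. }
  rewrite <- Hquad. apply (I_gt_0 _ (node i0)); auto.
  - intros x _. apply Rle_0_sqr.
  - replace (v (node i0)) with (c i0); [apply Rsqr_pos_lt; assumption|].
    unfold v. rewrite <- (rsum_idm_r n i0 c) by assumption.
    apply rsum_ext; intros i Hi. rewrite phi_node by assumption. reflexivity.
Qed.

End GramPosdef.

(** * Geometry of vertically mapped wedges *)

Definition cx (nu : nat -> V3) (i : nat) : R := vx (nu i).
Definition cy (nu : nat -> V3) (i : nat) : R := vy (nu i).
Definition cz (nu : nat -> V3) (i : nat) : R := vz (nu i).

Definition wedge_coord (c : nat -> R) (r s t : R) : R :=
  (1-r-s)*(1-t)*c 1%nat + (r*(1-t)*c 2%nat + (s*(1-t)*c 3%nat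
    + ((1-r-s)*t*c 4%nat + (r*t*c 5%nat + s*t*c 6%nat)))).
Definition wedge_coord_dr (c : nat -> R) (t : R) : R :=
  -(1-t)*c 1%nat + (1-t)*c 2%nat - t*c 4%nat + t*c 5%nat.
Definition wedge_coord_ds (c : nat -> R) (t : R) : R :=
  -(1-t)*c 1%nat + (1-t)*c 3%nat - t*c 4%nat + t*c 6%nat.
Definition wedge_coord_dt (c : nat -> R) (r s : R) : R :=
  -(1-r-s)*c 1%nat - r*c 2%nat - s*c 3%nat + (1-r-s)*c 4%nat + r*c 5%nat + s*c 6%nat.

Lemma Phi_coords nu r s t :
  Phi nu r s t = mkV3 (wedge_coord (cx nu) r s t) (wedge_coord (cy nu) r s t) (wedge_coord (cz nu) r s t).
Proof. reflexivity. Qed.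

Lemma wedge_coord_deriv_r c r s t : derivable_pt_lim (fun x => wedge_coord c x s t) r (wedge_coord_dr c t).
Proof. apply is_derive_Reals. unfold wedge_coord, wedge_coord_dr. auto_derive; [exact I | ring]. Qed.
Lemma wedge_coord_deriv_s c r s t : derivable_pt_lim (fun x => wedge_coord c r x t) s (wedge_coord_ds c t).
Proof. apply is_derive_Reals. unfold wedge_coord, wedge_coord_ds. auto_derive; [exact I | ring]. Qed.
Lemma wedge_coord_deriv_t c r s t : derivable_pt_lim (fun x => wedge_coord c r s x) t (wedge_coord_dt c r s).
Proof. apply is_derive_Reals. unfold wedge_coord, wedge_coord_dt. auto_derive; [exact I | ring]. Qed.
Lemma wedge_coord_deriv_edge c a b u t :
  derivable_pt_lim (fun x => wedge_coord c (gam_r a b x) (gam_s a b x) t) u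
    (wedge_coord_dr c t * (tri_vr b - tri_vr a) + wedge_coord_ds c t * (tri_vs b - tri_vs a)).
Proof.
  apply is_derive_Reals. unfold wedge_coord, wedge_coord_dr, wedge_coord_ds, gam_r, gam_s.
  auto_derive; [exact I | ring].
Qed.

Lemma vderiv_unique F x d d' : vderiv F x d -> vderiv F x d' -> d = d'.
Proof.
  destruct d, d'. intros [Hx [Hy Hz]] [Hx' [Hy' Hz']]. simpl in *.
  rewrite (uniqueness_limite _ _ _ _ Hx Hx'), (uniqueness_limite _ _ _ _ Hy Hy'),
    (uniqueness_limite _ _ _ _ Hz Hz'). reflexivity.
Qed.

Lemma Phi_partials nu dr ds dt r s t : is_partials nu dr ds dt ->
  dr r s t = mkV3 (wedge_coord_dr (cx nu) t) (wedge_coord_dr (cy nu) t) (wedge_coord_dr (cz nu) t) /\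
  ds r s t = mkV3 (wedge_coord_ds (cx nu) t) (wedge_coord_ds (cy nu) t) (wedge_coord_ds (cz nu) t) /\
  dt r s t = mkV3 (wedge_coord_dt (cx nu) r s) (wedge_coord_dt (cy nu) r s) (wedge_coord_dt (cz nu) r s).
Proof.
  intros HP. destruct (HP r s t) as [Hr [Hs Ht]]. repeat split.
  - apply (vderiv_unique _ _ _ _ Hr). exact (conj (wedge_coord_deriv_r (cx nu) r s t)
      (conj (wedge_coord_deriv_r (cy nu) r s t) (wedge_coord_deriv_r (cz nu) r s t))).
  - apply (vderiv_unique _ _ _ _ Hs). exact (conj (wedge_coord_deriv_s (cx nu) r s t)
      (conj (wedge_coord_deriv_s (cy nu) r s t) (wedge_coord_deriv_s (cz nu) r s t))).
  - apply (vderiv_unique _ _ _ _ Ht). exact (conj (wedge_coord_deriv_t (cx nu) r s t)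
      (conj (wedge_coord_deriv_t (cy nu) r s t) (wedge_coord_deriv_t (cz nu) r s t))).
Qed.

Lemma face_partials nu a b dXu dXt u t : is_face_partials nu a b dXu dXt ->
  let dr := tri_vr b - tri_vr a in let ds := tri_vs b - tri_vs a in
  dXu u t = mkV3 (wedge_coord_dr (cx nu) t * dr + wedge_coord_ds (cx nu) t * ds)
                 (wedge_coord_dr (cy nu) t * dr + wedge_coord_ds (cy nu) t * ds)
                 (wedge_coord_dr (cz nu) t * dr + wedge_coord_ds (cz nu) t * ds) /\
  dXt u t = mkV3 (wedge_coord_dt (cx nu) (gam_r a b u) (gam_s a b u))
                 (wedge_coord_dt (cy nu) (gam_r a b u) (gam_s a b u))
                 (wedge_coord_dt (cz nu) (gam_r a b u) (gam_s a b u)).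
Proof.
  intros HF dr ds. destruct (HF u t) as [Hu Ht]. split.
  - apply (vderiv_unique _ _ _ _ Hu). exact (conj (wedge_coord_deriv_edge (cx nu) a b u t)
      (conj (wedge_coord_deriv_edge (cy nu) a b u t) (wedge_coord_deriv_edge (cz nu) a b u t))).
  - apply (vderiv_unique _ _ _ _ Ht). set (r := gam_r a b u). set (s := gam_s a b u).
    exact (conj (wedge_coord_deriv_t (cx nu) r s t)
      (conj (wedge_coord_deriv_t (cy nu) r s t) (wedge_coord_deriv_t (cz nu) r s t))).
Qed.

Definition base_det (nu : nat -> V3) : R :=
  (cx nu 2%nat - cx nu 1%nat) * (cy nu 3%nat - cy nu 1%nat)
  - (cy nu 2%nat - cy nu 1%nat) * (cx nu 3%nat - cx nu 1%nat).

Definition height (nu : nat -> V3) (r s : R) : R :=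
  (1-r-s)*(cz nu 4%nat - cz nu 1%nat) + r*(cz nu 5%nat - cz nu 2%nat) + s*(cz nu 6%nat - cz nu 3%nat).

Ltac use_vertical HV :=
  destruct HV as [V1 [V2 [V3 [V4 [V5 V6]]]]]; unfold cx, cy in *;
  rewrite <- ?V1, <- ?V2, <- ?V3, <- ?V4, <- ?V5, <- ?V6.

Lemma Jac_vertical nu dr ds dt r s t : vertically_mapped nu -> is_partials nu dr ds dt ->
  Jac dr ds dt r s t = height nu r s * base_det nu.
Proof.
  intros HV HP. unfold Jac. destruct (Phi_partials nu dr ds dt r s t HP) as [-> [-> ->]].
  unfold det3, dot, cross, height, base_det, wedge_coord_dr, wedge_coord_ds, wedge_coord_dt; simpl.
  use_vertical HV. ring.
Qed.

Definition edge_dx (nu : nat -> V3) (a b : nat) : R :=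
  (cx nu 2%nat - cx nu 1%nat) * (tri_vr b - tri_vr a) + (cx nu 3%nat - cx nu 1%nat) * (tri_vs b - tri_vs a).
Definition edge_dy (nu : nat -> V3) (a b : nat) : R :=
  (cy nu 2%nat - cy nu 1%nat) * (tri_vr b - tri_vr a) + (cy nu 3%nat - cy nu 1%nat) * (tri_vs b - tri_vs a).
Definition edge_height (nu : nat -> V3) (a b : nat) (u : R) : R := height nu (gam_r a b u) (gam_s a b u).

Lemma face_cross_vertical nu a b dXu dXt u t : vertically_mapped nu -> is_face_partials nu a b dXu dXt ->
  cross (dXu u t) (dXt u t)
  = mkV3 (edge_dy nu a b * edge_height nu a b u) (- (edge_dx nu a b * edge_height nu a b u)) 0.
Proof.
  intros HV HF. destruct (face_partials nu a b dXu dXt u t HF) as [-> ->].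
  unfold cross, edge_dx, edge_dy, edge_height, height, wedge_coord_dr, wedge_coord_ds, wedge_coord_dt; simpl.
  use_vertical HV. f_equal; ring.
Qed.

Lemma face_jac_vertical nu a b dXu dXt u t : vertically_mapped nu -> is_face_partials nu a b dXu dXt ->
  face_jac dXu dXt u t = Rabs (edge_height nu a b u) * sqrt (edge_dx nu a b ^ 2 + edge_dy nu a b ^ 2).
Proof.
  intros HV HF. unfold face_jac, vnorm, dot. rewrite (face_cross_vertical nu a b dXu dXt u t HV HF); simpl.
  rewrite <- sqrt_Rsqr_abs, <- sqrt_mult_alt by apply Rle_0_sqr.
  f_equal. unfold Rsqr. ring.
Qed.

Lemma face_horizontal_shift nu a b u t : vertically_mapped nu ->
  vx (vsub (Xf nu a b u t) (Xf nu a b 0 0)) = u * edge_dx nu a b /\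
  vy (vsub (Xf nu a b u t) (Xf nu a b 0 0)) = u * edge_dy nu a b.
Proof.
  intros HV. unfold vsub, Xf, edge_dx, edge_dy, gam_r, gam_s. rewrite !Phi_coords; simpl.
  unfold wedge_coord. use_vertical HV. split; ring.
Qed.

Lemma edge_height_affine nu a b u :
  edge_height nu a b u = edge_height nu a b 0 + u * (edge_height nu a b 1 - edge_height nu a b 0).
Proof. unfold edge_height, height, gam_r, gam_s. ring. Qed.

Lemma edge_in_tri a b u : (a < 3)%nat -> (b < 3)%nat -> 0 <= u <= 1 -> in_tri (gam_r a b u) (gam_s a b u).
Proof.
  intros Ha Hb Hu. unfold in_tri, gam_r, gam_s.
  destruct a as [|[|[|a]]]; try lia; destruct b as [|[|[|b]]]; try lia; simpl; lra.
Qed.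

Lemma edge_tangent_pos nu a b : base_det nu <> 0 -> (a < 3)%nat -> (b < 3)%nat -> a <> b ->
  0 < edge_dx nu a b ^ 2 + edge_dy nu a b ^ 2.
Proof.
  intros HD Ha Hb Hab.
  set (dr := tri_vr b - tri_vr a). set (ds := tri_vs b - tri_vs a).
  assert (Hdir : dr <> 0 \/ ds <> 0).
  { unfold dr, ds. destruct a as [|[|[|a]]]; try lia; destruct b as [|[|[|b]]]; try lia; simpl; lra. }
  (* (edge_dx, edge_dy) is the image of (dr, ds) under the invertible base matrix *)
  assert (Er : base_det nu * dr = (cy nu 3%nat - cy nu 1%nat) * edge_dx nu a b
                                  - (cx nu 3%nat - cx nu 1%nat) * edge_dy nu a b)
    by (unfold base_det, edge_dx, edge_dy; fold dr ds; ring).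
  assert (Es : base_det nu * ds = (cx nu 2%nat - cx nu 1%nat) * edge_dy nu a b
                                  - (cy nu 2%nat - cy nu 1%nat) * edge_dx nu a b)
    by (unfold base_det, edge_dx, edge_dy; fold dr ds; ring).
  destruct (Rlt_dec 0 (edge_dx nu a b ^ 2 + edge_dy nu a b ^ 2)) as [|Hle]; [assumption|].
  assert (Hx : edge_dx nu a b = 0) by nra. assert (Hy : edge_dy nu a b = 0) by nra.
  rewrite Hx, Hy in Er, Es.
  destruct Hdir as [Hd|Hd]; exfalso; apply Hd; apply (Rmult_eq_reg_l (base_det nu)); lra.
Qed.

Lemma edge_height_sign nu a b :
  (forall u, 0 <= u <= 1 -> 0 < edge_height nu a b u * base_det nu) ->
  exists sg, sg * sg = 1 /\ forall u, 0 <= u <= 1 -> Rabs (edge_height nu a b u) = sg * edge_height nu a b u.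
Proof.
  intros Hpos. destruct (Rlt_dec 0 (base_det nu)).
  - exists 1. split; [ring|]. intros u Hu. specialize (Hpos u Hu). rewrite Rabs_right; [ring | nra].
  - exists (-1). split; [ring|]. intros u Hu. specialize (Hpos u Hu). rewrite Rabs_left; [ring | nra].
Qed.

Section Face.
Variables (nu : nat -> V3) (a b : nat) (dXu dXt : R -> R -> V3).
Hypothesis HV : vertically_mapped nu.
Hypothesis HF : is_face_partials nu a b dXu dXt.
Hypothesis Hsign : forall u, 0 <= u <= 1 -> 0 < edge_height nu a b u * base_det nu.

Let L := sqrt (edge_dx nu a b ^ 2 + edge_dy nu a b ^ 2).

Lemma face_jac_signed : exists sg, sg * sg = 1 /\
  forall u t, 0 <= u <= 1 -> face_jac dXu dXt u t = sg * L * edge_height nu a b u.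
Proof.
  destruct (edge_height_sign nu a b Hsign) as [sg [Hsg Habs]]. exists sg. split; [assumption|].
  intros u t Hu. rewrite (face_jac_vertical nu a b dXu dXt u t HV HF), Habs by assumption. unfold L. ring.
Qed.

Lemma face_jac_affine : exists c0 c1, forall u t, 0 <= u <= 1 -> 0 <= t <= 1 ->
  face_jac dXu dXt u t = c0 + c1 * u.
Proof.
  destruct face_jac_signed as [sg [_ Hjac]].
  exists (sg * L * edge_height nu a b 0), (sg * L * (edge_height nu a b 1 - edge_height nu a b 0)).
  intros u t Hu _. rewrite Hjac, edge_height_affine by assumption. ring.
Qed.

Lemma face_planar : (a < 3)%nat -> (b < 3)%nat -> a <> b ->
  exists n, vnorm n = 1 /\ forall u t, 0 <= u <= 1 -> 0 <= t <= 1 ->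
    dot (vsub (Xf nu a b u t) (Xf nu a b 0 0)) n = 0 /\
    cross (dXu u t) (dXt u t) = vscal (face_jac dXu dXt u t) n.
Proof.
  intros Ha Hb Hab. destruct face_jac_signed as [sg [Hsg Hjac]].
  set (X := edge_dx nu a b) in *. set (Y := edge_dy nu a b) in *.
  assert (HD : base_det nu <> 0) by (intro HD; specialize (Hsign 0); rewrite HD in Hsign; lra).
  assert (HXY : 0 < X ^ 2 + Y ^ 2) by (apply edge_tangent_pos; assumption).
  assert (HL : 0 < L) by (apply sqrt_lt_R0; assumption).
  assert (HL2 : L * L = X ^ 2 + Y ^ 2) by (apply sqrt_sqrt; lra).
  (* the horizontal normal of the edge, oriented so that it agrees with dXu x dXt *)
  exists (mkV3 (sg * Y / L) (- (sg * X) / L) 0). split.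
  - unfold vnorm, dot; simpl. rewrite <- sqrt_1. f_equal.
    transitivity ((sg * sg) * ((X ^ 2 + Y ^ 2) / (L * L))); [field; lra|].
    rewrite Hsg, HL2. field. lra.
  - intros u t Hu Ht. split.
    + destruct (face_horizontal_shift nu a b u t HV) as [Ex Ey].
      unfold dot. rewrite Ex, Ey. simpl. fold X Y. field. lra.
    + rewrite (face_cross_vertical nu a b dXu dXt u t HV HF), Hjac by assumption.
      unfold vscal; simpl. fold X Y. f_equal; [| | ring].
      * transitivity ((sg * sg) * (Y * edge_height nu a b u)); [rewrite Hsg; ring | field; lra].
      * transitivity ((sg * sg) * (- (X * edge_height nu a b u))); [rewrite Hsg; ring | field; lra].
Qed.

End Face.

(** * Nodal bases and mass matrices *)

Lemma poly2_separable N g : poly2_deg_le N g -> separable g.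
Proof.
  intros [c Hc].
  apply (separable_ext (fun r s => rsum (S N) (fun a => rsum (S N - a) (fun b => c a b * r ^ a * s ^ b))));
    [|exact Hc].
  apply (separable_rsum (S N) (fun a r s => rsum (S N - a) (fun b => c a b * r ^ a * s ^ b))).
  intros a _. apply (separable_rsum (S N - a) (fun b r s => c a b * r ^ a * s ^ b)).
  intros b _. apply separable_prod; cont_tac.
Qed.

Lemma lag1D_cont N tg j : cont (lag1D N tg j).
Proof.
  apply (cont_rprod (S N) (fun m x => if Nat.eqb m j then 1 else (x - tg m) / (tg j - tg m))).
  intros m _. destruct (Nat.eqb m j); unfold Rdiv; cont_tac.
Qed.

Lemma GLL_increasing N tg j k : is_GLL N tg -> (j < k)%nat -> (k <= N)%nat -> tg j < tg k.
Proof.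
  intros [_ [_ [Hstep _]]] Hjk. induction k as [|k IH]; [lia|]. intros Hk.
  destruct (PeanoNat.Nat.eq_dec j k) as [->|Hne]; [apply Hstep; lia|].
  apply Rlt_trans with (tg k); [apply IH; lia | apply Hstep; lia].
Qed.

Lemma GLL_in_unit N tg k : is_GLL N tg -> (k <= N)%nat -> 0 <= tg k <= 1.
Proof.
  intros HG Hk. pose proof HG as [H0 [H1 _]]. rewrite <- H0, <- H1.
  split; [destruct k | destruct (PeanoNat.Nat.eq_dec k N) as [->|]]; try lra;
    left; apply (GLL_increasing N); auto; lia.
Qed.

Lemma rprod_one n f : (forall i, (i < n)%nat -> f i = 1) -> rprod n f = 1.
Proof. induction n; intros H; simpl; [reflexivity|]. rewrite IHn, H by auto with arith. ring. Qed.

Lemma rprod_zero n f k : (k < n)%nat -> f k = 0 -> rprod n f = 0.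
Proof.
  induction n; intros Hk Hf; simpl; [lia|].
  destruct (PeanoNat.Nat.eq_dec k n) as [<-|]; [rewrite Hf | rewrite IHn by (auto; lia)]; ring.
Qed.

Lemma lag1D_node N tg j k : is_GLL N tg -> (j <= N)%nat -> (k <= N)%nat -> lag1D N tg j (tg k) = idm j k.
Proof.
  intros HG Hj Hk. unfold lag1D, idm.
  destruct (PeanoNat.Nat.eqb_spec j k) as [<-|Hne].
  - apply rprod_one. intros m Hm. destruct (PeanoNat.Nat.eqb_spec m j); [reflexivity|].
    field. intro E. assert (Hmj : (m < j \/ j < m)%nat) by lia.
    destruct Hmj as [Hmj|Hmj].
    + pose proof (GLL_increasing N tg m j HG Hmj Hj). lra.
    + pose proof (GLL_increasing N tg j m HG Hmj ltac:(lia)). lra.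
  - apply (rprod_zero _ _ k); [lia|]. destruct (PeanoNat.Nat.eqb_spec k j); [lia|].
    unfold Rminus. rewrite Rplus_opp_r. unfold Rdiv. ring.
Qed.

Lemma M1D_posdef N tg : is_GLL N tg -> posdef (S N) (M1D N tg).
Proof.
  intros HG.
  apply gram_posdef with (I := fun f => DRInt f 0 1) (adm := cont) (dom := fun t => 0 <= t <= 1)
    (phi := lag1D N tg) (node := tg).
  - apply cont_const.
  - apply cont_plus.
  - apply cont_mult.
  - intros f g; apply DRInt_plus.
  - intros c f; apply DRInt_scal.
  - intros f x0 Hf Hpos Hx0 Hfx0. apply (DRInt_gt_0 f 0 1 x0); auto; lra.
  - intros j _. apply lag1D_cont.
  - intros k Hk. apply (GLL_in_unit N); [assumption | lia].
  - intros j k Hj Hk. apply lag1D_node; [assumption | lia | lia].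
Qed.

Lemma Mtri_posdef N rn sn ltri J : is_tri_lagrange N rn sn ltri ->
  separable (fun r s => J r s 0) -> (forall r s, in_tri r s -> 0 < J r s 0) ->
  posdef (Np N) (Mtri ltri J).
Proof.
  intros [Hnodes [Hpoly Hlag]] HJ HJpos.
  apply gram_posdef with (I := fun f => TriInt (fun r s => f (r, s) * J r s 0))
    (phi := fun i x => ltri i (fst x) (snd x)) (adm := fun f => separable (fun r s => f (r, s)))
    (dom := fun x => in_tri (fst x) (snd x)) (node := fun i => (rn i, sn i)).
  - intros c. apply separable_const.
  - intros f g. apply separable_plus.
  - intros f g. apply separable_mult.
  - intros f g Hf Hg. rewrite <- TriInt_plus by (apply separable_mult; assumption).
    f_equal. extensionality r. extensionality s. ring.
  - intros c f Hf. rewrite <- TriInt_scal by (apply separable_mult; assumption).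
    f_equal. extensionality r. extensionality s. ring.
  - intros f [r0 s0] Hf Hpos Hx0 Hfx0. apply (TriInt_gt_0 _ r0 s0); [apply separable_mult; assumption | | assumption |].
    + intros r s Hrs. apply Rmult_le_pos; [apply (Hpos (r, s)), Hrs | left; apply HJpos, Hrs].
    + apply Rmult_lt_0_compat; [assumption | apply HJpos, Hx0].
  - intros i Hi. apply (poly2_separable N), Hpoly, Hi.
  - intros i Hi. apply Hnodes, Hi.
  - intros i k Hi Hk. apply Hlag; assumption.
Qed.

Lemma Mk_kron N rn sn ltri tg J p q : is_tri_lagrange N rn sn ltri ->
  (forall r s t, J r s t = J r s 0) -> separable (fun r s => J r s 0) ->
  in_range2 (Np N) (S N) p -> in_range2 (Np N) (S N) q ->
  Mk N ltri tg J p q = kron (Mtri ltri J) (M1D N tg) p q.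
Proof.
  intros [_ [Hpoly _]] HJt HJ [Hp _] [Hq _]. unfold Mk, kron, Mtri, M1D.
  rewrite <- WedgeInt_tensor.
  - f_equal. extensionality r. extensionality s. extensionality t. rewrite HJt. ring.
  - apply separable_mult; [apply separable_mult; apply (poly2_separable N), Hpoly|]; assumption.
  - apply cont_mult; apply lag1D_cont.
Qed.

Lemma Mface_kron N rn sn ltri tg a b Jf p q : is_tri_lagrange N rn sn ltri ->
  (forall u t, Jf u t = Jf u 0) -> cont (fun u => Jf u 0) ->
  in_range2 (Np N) (S N) p -> in_range2 (Np N) (S N) q ->
  Mface N ltri tg a b Jf p q = kron (Medge ltri a b Jf) (M1D N tg) p q.
Proof.
  intros [_ [Hpoly _]] HJt HJ [Hp _] [Hq _]. unfold Mface, kron, Medge, M1D.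
  assert (Hedge : forall i, (i < Np N)%nat -> cont (fun u => ltri i (gam_r a b u) (gam_s a b u))).
  { intros i Hi. apply separable_cont_comp; [apply (poly2_separable N), Hpoly, Hi | |];
      unfold gam_r, gam_s; cont_tac. }
  rewrite <- DRInt2_tensor.
  - f_equal. extensionality t. f_equal. extensionality u. rewrite HJt. ring.
  - apply cont_mult; [apply cont_mult; apply Hedge|]; assumption.
  - apply cont_mult; apply lag1D_cont.
Qed.

Lemma Jac_vertical_separable nu dr ds dt : vertically_mapped nu -> is_partials nu dr ds dt ->
  separable (fun r s => Jac dr ds dt r s 0).
Proof.
  intros HV HP. apply (separable_ext (fun r s =>
    (cz nu 4%nat - cz nu 1%nat) * base_det nu
    + ((cz nu 5%nat - cz nu 2%nat) - (cz nu 4%nat - cz nu 1%nat)) * base_det nu * r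
    + ((cz nu 6%nat - cz nu 3%nat) - (cz nu 4%nat - cz nu 1%nat)) * base_det nu * s)).
  - apply separable_affine.
  - intros r s. rewrite (Jac_vertical nu dr ds dt) by assumption. unfold height. ring.
Qed.

Lemma face_jac_cont nu a b dXu dXt : vertically_mapped nu -> is_face_partials nu a b dXu dXt ->
  cont (fun u => face_jac dXu dXt u 0).
Proof.
  intros HV HF.
  apply (cont_ext (fun u => Rabs (edge_height nu a b 0 + u * (edge_height nu a b 1 - edge_height nu a b 0))
                            * sqrt (edge_dx nu a b ^ 2 + edge_dy nu a b ^ 2))).
  - intros u. rewrite (face_jac_vertical nu a b dXu dXt), <- edge_height_affine by assumption. reflexivity.
  - cont_tac.
Qed.

Theorem mainTheorem4
  (N : nat) (nu : nat -> V3) (dr ds dt : R -> R -> R -> V3)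
  (rn sn : nat -> R) (ltri : nat -> R -> R -> R) (tg : nat -> R)
  (a b : nat) (dXu dXt : R -> R -> V3) :
  (1 <= N)%nat ->
  vertically_mapped nu ->
  is_partials nu dr ds dt ->
  (forall r s t, in_wedge r s t -> 0 < Jac dr ds dt r s t) ->
  is_tri_lagrange N rn sn ltri ->
  is_GLL N tg ->
  (a < 3)%nat -> (b < 3)%nat -> a <> b ->
  is_face_partials nu a b dXu dXt ->
  (* planarity with constant unit normal *)
  (exists n : V3, vnorm n = 1 /\
     forall u t, 0 <= u <= 1 -> 0 <= t <= 1 ->
       dot (vsub (Xf nu a b u t) (Xf nu a b 0 0)) n = 0 /\
       cross (dXu u t) (dXt u t) = vscal (face_jac dXu dXt u t) n) /\
  (* J_f independent of t and affine in u *)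
  (exists c0 c1 : R, forall u t, 0 <= u <= 1 -> 0 <= t <= 1 ->
       face_jac dXu dXt u t = c0 + c1 * u) /\
  (* tensor-product structure of the face mass matrix *)
  (forall p q, in_range2 (Np N) (S N) p -> in_range2 (Np N) (S N) q ->
       Mface N ltri tg a b (face_jac dXu dXt) p q =
       kron (Medge ltri a b (face_jac dXu dXt)) (M1D N tg) p q) /\
  (* the volume and triangle mass matrices are invertible *)
  (exists Minv, is_inv2 (Np N) (S N) (Mk N ltri tg (Jac dr ds dt)) Minv) /\
  (exists Tinv, is_inv (Np N) (Mtri ltri (Jac dr ds dt)) Tinv) /\
  (* lift matrix *)
  (forall Minv Tinv,
     is_inv2 (Np N) (S N) (Mk N ltri tg (Jac dr ds dt)) Minv ->
     is_inv (Np N) (Mtri ltri (Jac dr ds dt)) Tinv ->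
     forall p q, in_range2 (Np N) (S N) p -> in_range2 (Np N) (S N) q ->
       mulmx2 (Np N) (S N) Minv (Mface N ltri tg a b (face_jac dXu dXt)) p q =
         kron (mulmx (Np N) Tinv (Medge ltri a b (face_jac dXu dXt))) idm p q /\
       (snd p <> snd q ->
         mulmx2 (Np N) (S N) Minv (Mface N ltri tg a b (face_jac dXu dXt)) p q = 0)).
Proof.
  (* the argument works for N = 0 as well *)
  intros _ HV HP HJpos HL HG Ha Hb Hab HF.
  assert (HJt : forall r s t, Jac dr ds dt r s t = Jac dr ds dt r s 0)
    by (intros; rewrite !(Jac_vertical nu dr ds dt) by assumption; reflexivity).
  assert (HJft : forall u t, face_jac dXu dXt u t = face_jac dXu dXt u 0)
    by (intros; rewrite !(face_jac_vertical nu a b dXu dXt) by assumption; reflexivity).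
  assert (Hsign : forall u, 0 <= u <= 1 -> 0 < edge_height nu a b u * base_det nu).
  { intros u Hu. unfold edge_height. rewrite <- (Jac_vertical nu dr ds dt _ _ 0) by assumption.
    apply HJpos. split; [apply edge_in_tri | lra]; assumption. }
  assert (Hvol := fun p q => Mk_kron N rn sn ltri tg _ p q HL HJt (Jac_vertical_separable nu dr ds dt HV HP)).
  assert (Hface := fun p q => Mface_kron N rn sn ltri tg a b _ p q HL HJft (face_jac_cont nu a b dXu dXt HV HF)).
  assert (HTpd : posdef (Np N) (Mtri ltri (Jac dr ds dt))).
  { apply (Mtri_posdef N rn sn); [assumption | apply (Jac_vertical_separable nu); assumption |].
    intros r s Hrs. apply HJpos. split; [assumption | lra]. }
  destruct (PosdefInvertible.posdef_is_inv _ _ HTpd) as [Tinv HT].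
  destruct (PosdefInvertible.posdef_is_inv _ _ (M1D_posdef N tg HG)) as [Binv HB].
  split; [apply (face_planar nu a b dXu dXt); assumption|].
  split; [apply (face_jac_affine nu a b dXu dXt); assumption|].
  split; [exact Hface|]. split.
  { exists (kron Tinv Binv). apply (is_inv2_ext _ _ _ _ _ Hvol), is_inv2_kron; assumption. }
  split; [exists Tinv; assumption|].
  intros Minv Tinv' HMinv HT' p q Hp Hq.
  rewrite (lift_kron _ _ _ _ _ _ _ _ _ _ Hvol Hface HT' HB HMinv p q Hp Hq). split; [reflexivity|].
  intros Hne. unfold kron, idm. destruct (PeanoNat.Nat.eqb_spec (snd p) (snd q)); [contradiction | ring].
Qed.
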